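(* Let $G=(V,E)$ be a finite undirected graph with $m=|E|\ge 1$ edges, and for each node $i\in V$ let $k_i$ denote its degree. Consider the random multigraph $G'$ produced by the configuration model from $G$ (see context). For nonnegative integers $a,b,c$ and positive integer $M$ define \[ A(a,b,M)=\sum_{t=1}^{\min\{a,b\}}(-1)^{t+1}\frac{\binom{a}{t}\binom{b}{t}\,t!}{\prod_{p=1}^{t}(2M+1-2p)}, \] \[ C(a,b,c,M)=\sum_{t=1}^{\min\{b,c-1\}}(-1)^{t+1}A(a,c-t,M-t)\,\frac{\binom{c}{t}\binom{b}{t}\,t!}{\prod_{p=1}^{t}(2M+1-2p)}, \] \[ T(a,b,c,M)=\sum_{t=1}^{\min\{a-1,b-1\}}(-1)^{t+1}C(a-t,b-t,c,M-t)\,\frac{\binom{a}{t}\binom{b}{t}\,t!}{\prod_{p=1}^{t}(2M+1-2p)}, \] with empty sums equal to $0$. Then for any three pairwise distinct nodes $i,j,r\in V$: (1) the probability that $i$ and $j$ are connected in $G'$ equals $A(k_i,k_j,m)$; (2) the probability that $i$ and $r$ are connected and $j$ and $r$ are connected in $G'$ equals $C(k_i,k_j,k_r,m)$; (3) the probability that $i$ and $r$ are connected, $j$ and $r$ are connected, and $i$ and $j$ are connected in $G'$ equals $T(k_i,k_j,k_r,m)$.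
   Context: Configuration model: given $G=(V,E)$ with $m$ edges and degrees $k_i$, each node $i$ is given $k_i$ ''stubs'' (half-edges), for a total of $2m$ stubs. A perfect matching of the $2m$ stubs is chosen uniformly at random among all $(2m)!/(2^m m!)=\prod_{p=1}^{m}(2m+1-2p)$ perfect matchings; each matched pair of stubs, one attached to node $u$ and one to node $v$, becomes an edge $\{u,v\}$ of the random multigraph $G'$ (multi-edges and self-loops allowed). Thus every node keeps its degree $k_i$. Two distinct nodes $u,v$ are said to be connected in $G'$ if at least one stub of $u$ is matched with at least one stub of $v$. *)

From mathcomp Require Import all_boot all_order all_algebra all_fingroup.
Set Implicit Arguments. Unset Strict Implicit. Unset Printing Implicit Defensive.
Import Order.TTheory GRing.Theory Num.Theory.
Local Open Scope ring_scope.

Section Config.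
Variables (V : finType) (e : rel V).

Definition deg (i : V) : nat := #|[set j | e i j]|.

Definition edges : {set {set V}} := [set [set x; y] | x in V, y in V & e x y].

Definition nedges : nat := #|edges|.

(* stubs: node i carries deg i stubs, (i, s) with s < deg i *)
Definition stub := {i : V & 'I_(deg i)}.

Definition owner (s : stub) : V := tag s.

(* perfect matchings of the stubs = fixed-point-free involutions *)
Definition matchings : {set {perm stub}} :=
  [set p : {perm stub} | [forall x, (p (p x) == x) && (p x != x)]].

Definition connected (p : {perm stub}) (u v : V) : bool :=
  [exists s : stub, (owner s == u) && (owner (p s) == v)].

Definition prob (P : pred {perm stub}) : rat :=
  (#|[set p in matchings | P p]|)%:R / (#|matchings|)%:R.

End Config.

Definition den (t : nat) (M : int) : rat :=
  \prod_(1 <= p < t.+1) ((2 * M + 1 - 2 * (p : int)) %:~R).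

Definition coefA (a b t : nat) : rat := ('C(a, t) * 'C(b, t) * t`!)%:R.

Definition Afun (a b : nat) (M : int) : rat :=
  \sum_(1 <= t < (minn a b).+1)
     (-1) ^+ t.+1 * coefA a b t / den t M.

Definition Cfun (a b c : nat) (M : int) : rat :=
  \sum_(1 <= t < (minn b (c - 1)).+1)
     (-1) ^+ t.+1 * Afun a (c - t) (M - (t : int)) * coefA c b t / den t M.

Definition Tfun (a b c : nat) (M : int) : rat :=
  \sum_(1 <= t < (minn (a - 1) (b - 1)).+1)
     (-1) ^+ t.+1 * Cfun (a - t) (b - t) c (M - (t : int)) * coefA a b t / den t M.

From mathcomp Require Import all_boot all_order all_algebra all_fingroup zify ring.
Set Implicit Arguments. Unset Strict Implicit. Unset Printing Implicit Defensive.
Import Order.TTheory GRing.Theory Num.Theory.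

(* A perfect matching of a 2n-set U is a fixed-point-free involution of U, and there are
   (2n-1)!! of them.  For disjoint P, Q in U and x in P, a matching joins P to Q iff either
   it joins P minus x to Q, or it pairs x with some y in Q and the matching it induces on
   U minus {x, y} does not join P minus x to Q minus y.  Counting both cases gives a
   recursion in |P| which the alternating sums A also satisfy (Pascal's rule for
   'C(a, t) 'C(b, t) t!), so they agree.  C is obtained in the same way by peeling the stubs
   of j towards r, using A on the smaller configuration, and T by peeling the stubs of i
   towards j, using C. *)

Section PerfectMatchings.
Variable X : finType.
Implicit Types (p q : {perm X}) (U S T P Q : {set X}) (F G : pred {perm X}).

Definition matching_on U p : bool :=
  [forall z, if z \in U then (p (p z) == z) && (p z != z) else p z == z].

Definition connects p S T : bool := [exists z in S, p z \in T].

Definition nmatchings U F : nat := #|[set p | matching_on U p && F p]|.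

Lemma matching_onP p U :
  reflect (forall z, if z \in U then (p (p z) == z) && (p z != z) else p z == z)
          (matching_on U p).
Proof. exact: forallP. Qed.

Lemma matching_out p U z : matching_on U p -> z \notin U -> p z = z.
Proof. by move=> /matching_onP/(_ z) + /negbTE zU; rewrite zU => /eqP. Qed.

Lemma matching_in p U z : matching_on U p -> z \in U ->
  [/\ p z \in U, p (p z) = z & p z != z].
Proof.
move=> pU zU; have /matching_onP/(_ z) := pU; rewrite zU => /andP[/eqP ppz pzz].
split=> //; apply: contraTT pzz => /(matching_out pU) pzE.
by rewrite negbK -[X in _ == X]ppz pzE.
Qed.

Lemma matching_mul_tperm p U x y : matching_on U p -> p x = y -> x != y -> x \in U ->
  matching_on (U :\ x :\ y) (p * tperm x y)%g.
Proof.
move=> pU pxy xy xU; have pyx : p y = x by rewrite -pxy; case: (matching_in pU xU).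
apply/matching_onP => z; rewrite !in_setD1 !permM.
have [->|zy] /= := eqVneq z y; first by rewrite pyx tpermL.
have [->|zx] /= := eqVneq z x; first by rewrite pxy tpermR.
case: ifP => [zU|/negbT zU]; last by rewrite (matching_out pU zU) tpermD 1?eq_sym.
case: (matching_in pU zU) => _ ppz pzz.
have pzx : x != p z by rewrite -pyx (inj_eq perm_inj) eq_sym.
have pzy : y != p z by rewrite -pxy (inj_eq perm_inj) eq_sym.
by rewrite (tpermD pzx pzy) ppz tpermD ?eqxx // eq_sym.
Qed.

Lemma matching_mul_tpermV q U x y : matching_on (U :\ x :\ y) q -> x != y ->
    x \in U -> y \in U ->
  matching_on U (q * tperm x y)%g /\ (q * tperm x y)%g x = y.
Proof.
move=> qU xy xU yU; set p := (q * tperm x y)%g.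
have notU'x : x \notin U :\ x :\ y by rewrite !in_setD1 eqxx andbF.
have notU'y : y \notin U :\ x :\ y by rewrite !in_setD1 eqxx.
have pxy : p x = y by rewrite permM (matching_out qU notU'x) tpermL.
have pyx : p y = x by rewrite permM (matching_out qU notU'y) tpermR.
split=> //; apply/matching_onP => z.
have [->|zx] := eqVneq z x; first by rewrite xU pxy pyx eqxx eq_sym xy.
have [->|zy] := eqVneq z y; first by rewrite yU pyx pxy eqxx xy.
case: ifP => [zU|/negbT zU]; last first.
  have zU' : z \notin U :\ x :\ y by rewrite !in_setD1 (negbTE zU) !andbF.
  by rewrite permM (matching_out qU zU') tpermD 1?eq_sym.
have zU' : z \in U :\ x :\ y by rewrite !in_setD1 zx zy.
case: (matching_in qU zU') => qzU qqz qzz.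
have qzx : x != q z by apply: contraTneq qzU => <-.
have qzy : y != q z by apply: contraTneq qzU => <-.
by rewrite /p !permM (tpermD qzx qzy) qqz tpermD ?eqxx // eq_sym.
Qed.

Lemma matching_setD2_fixed q U x y : matching_on (U :\ x :\ y) q -> q x = x /\ q y = y.
Proof. by move=> qU; split; apply: (matching_out qU); rewrite !in_setD1 eqxx ?andbF. Qed.

Lemma eq_nmatchings U F G :
  (forall p, matching_on U p -> F p = G p) -> nmatchings U F = nmatchings U G.
Proof.
move=> FG; apply: eq_card => p; rewrite !inE.
by case: (boolP (matching_on U p)) => //= /FG.
Qed.

Lemma nmatchings_split U F G :
  nmatchings U F = nmatchings U (fun p => G p && F p) + nmatchings U (fun p => ~~ G p && F p).
Proof.
rewrite /nmatchings -(cardID [set p | G p] [set p | matching_on U p && F p]).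
by congr (_ + _); apply: eq_card => p; rewrite !inE; case: (G p); rewrite ?andbT ?andbF.
Qed.

Lemma nmatchings_partition U F x Q :
  nmatchings U (fun p => (p x \in Q) && F p) =
  \sum_(y in Q) nmatchings U (fun p => (p x == y) && F p).
Proof.
rewrite /nmatchings -sum1_card (partition_big (fun p : {perm X} => p x) (mem Q)) /=; last first.
  by move=> p; rewrite inE => /andP[_ /andP[]].
apply: eq_bigr => y yQ; rewrite -sum1_card; apply: eq_bigl => p; rewrite !inE.
by case: eqP => [->|]; rewrite ?yQ ?andbF // andbT.
Qed.

Lemma nmatchings_pair U F x y : x != y -> x \in U -> y \in U ->
  nmatchings U (fun p => (p x == y) && F p) =
  nmatchings (U :\ x :\ y) (fun q => F (q * tperm x y)%g).
Proof.
move=> xy xU yU; have tK : involutive (fun q : {perm X} => (q * tperm x y)%g).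
  by move=> q; rewrite -mulgA tperm2 mulg1.
rewrite /nmatchings -(card_imset _ (inv_inj tK)) (can_imset_pre _ tK).
apply: eq_card => p; rewrite !inE /=; apply/idP/idP.
  case/and3P=> pU /eqP pxy ->; rewrite andbT.
  by have := matching_mul_tperm pU pxy xy xU; rewrite tK.
by case/andP=> /matching_mul_tpermV/(_ xy xU yU)[-> ->] ->; rewrite eqxx.
Qed.

Definition oddfact n := (\prod_(1 <= k < n.+1) (2 * k - 1))%N.

Lemma oddfactS n : oddfact n.+1 = (oddfact n * (2 * n + 1))%N.
Proof. by rewrite /oddfact big_nat_recr //=; congr (_ * _)%N; lia. Qed.

Lemma oddfact_gt0 n : (0 < oddfact n)%N.
Proof. by elim: n => [|n IHn]; rewrite ?oddfactS ?muln_gt0 ?IHn ?addn1 // /oddfact big_geq. Qed.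

Lemma nmatchingsT U n : #|U| = n.*2 -> nmatchings U predT = oddfact n.
Proof.
elim: n U => [|n IHn] U cardU.
  have -> : U = set0 by apply: cards0_eq.
  rewrite /oddfact big_geq // -(cards1 (1%g : {perm X})); apply: eq_card => p.
  rewrite !inE andbT; apply/matching_onP/eqP => [p1|-> z].
    by apply/permP => z; have := p1 z; rewrite inE perm1 => /eqP.
  by rewrite inE perm1.
have /card_gt0P[x xU] : (0 < #|U|)%N by rewrite cardU.
have cardUx : #|U :\ x| = n.*2.+1 by have := cardsD1 x U; rewrite xU cardU /=; lia.
rewrite (@eq_nmatchings _ _ (fun p => (p x \in U :\ x) && true)); last first.
  by move=> p pU; case: (matching_in pU xU) => pxU _ pxx; rewrite in_setD1 pxU pxx.
rewrite nmatchings_partition (eq_bigr (fun _ => oddfact n)) ?sum_nat_const ?cardUx.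
  by rewrite oddfactS; lia.
move=> y; rewrite in_setD1 => /andP[yx yU]; rewrite nmatchings_pair 1?eq_sym //.
by apply: IHn; have := cardsD1 y (U :\ x); rewrite in_setD1 yx yU cardUx /=; lia.
Qed.

Lemma connects0 p T : connects p set0 T = false.
Proof. by apply/existsP => -[z]; rewrite inE. Qed.

Lemma connectsS p S S' T : S \subset S' -> connects p S T -> connects p S' T.
Proof.
by move=> /subsetP sSS' /existsP[z /andP[zS pzT]]; apply/existsP; exists z; rewrite sSS'.
Qed.

Lemma connects_setD1l p S T x : x \in S -> connects p S T = connects p (S :\ x) T || (p x \in T).
Proof.
move=> xS; apply/existsP/orP => [[z /andP[]]|[/existsP[z]|pxT]].
- case: (eqVneq z x) => [-> _|zx zS pzT]; first by right.
  by left; apply/existsP; exists z; rewrite in_setD1 zx zS.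
- by rewrite in_setD1 => /andP[/andP[_ zS] pzT]; exists z; rewrite zS.
- by exists x; rewrite xS.
Qed.

Lemma connects_setD1r p S T y : p y = y -> y \notin S -> connects p S (T :\ y) = connects p S T.
Proof.
move=> pyy yS; apply: eq_existsb => z; rewrite in_setD1 -{1}pyy (inj_eq perm_inj).
by case: eqVneq => [->|]; rewrite ?(negbTE yS) ?andbF.
Qed.

Lemma connects_mul_tperm q S T x y : [disjoint S & T] -> q x = x -> q y = y ->
  connects (q * tperm x y)%g S T =
  [|| connects q S T, (x \in S) && (y \in T) | (y \in S) && (x \in T)].
Proof.
move=> dST qx qy; have qz z : z != x -> z != y -> (q * tperm x y)%g z = q z.
  move=> zx zy; rewrite permM tpermD //.
    by rewrite -{1}qx (inj_eq perm_inj) eq_sym.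
  by rewrite -{1}qy (inj_eq perm_inj) eq_sym.
apply/existsP/or3P => [[z /andP[zS]]|[/existsP[z /andP[zS qzT]]|/andP[xS yT]|/andP[yS xT]]].
- case: (eqVneq z x) zS => [-> xS|zx zS].
    by rewrite permM qx tpermL => yT; constructor 2; rewrite xS.
  case: (eqVneq z y) zS => [-> yS|zy zS].
    by rewrite permM qy tpermR => xT; constructor 3; rewrite yS.
  by rewrite qz // => qzT; constructor 1; apply/existsP; exists z; rewrite zS.
- have zT : z \notin T by rewrite (disjointFr dST zS).
  have zx : z != x by apply: contraTneq qzT => E; rewrite E qx -E.
  have zy : z != y by apply: contraTneq qzT => E; rewrite E qy -E.
  by exists z; rewrite zS qz.
- by exists x; rewrite xS permM qx tpermL.
- by exists y; rewrite yS permM qy tpermR.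
Qed.

Lemma nmatchings_connects_peel U P Q F x : x \in P -> P \subset U -> Q \subset U ->
    [disjoint P & Q] ->
  nmatchings U (fun p => connects p P Q && F p) =
  nmatchings U (fun p => connects p (P :\ x) Q && F p) +
  \sum_(y in Q) nmatchings (U :\ x :\ y)
                  (fun q => ~~ connects q (P :\ x) (Q :\ y) && F (q * tperm x y)%g).
Proof.
move=> xP sPU sQU dPQ; set P' := P :\ x.
rewrite (nmatchings_split _ _ (fun p => connects p P' Q)); congr (_ + _).
  apply: eq_nmatchings => p _; case: (boolP (connects p P' Q)) => //= cP'Q.
  by rewrite (connectsS (subD1set P x) cP'Q).
rewrite (@eq_nmatchings _ _ (fun p => (p x \in Q) && (~~ connects p P' Q && F p))); last first.
  by move=> p _; rewrite (connects_setD1l _ _ xP); case: (connects p P' Q); case: (p x \in Q).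
rewrite nmatchings_partition; apply: eq_bigr => y yQ.
have xy : x != y by apply: contraTneq yQ => <-; rewrite (disjointFr dPQ xP).
have yP' : y \notin P' by rewrite in_setD1 (disjointFl dPQ yQ) andbF.
rewrite nmatchings_pair ?(subsetP sPU x) ?(subsetP sQU y) //.
apply: eq_nmatchings => q /matching_setD2_fixed[qx qy].
rewrite connects_mul_tperm ?(disjointWl (subD1set P x) dPQ) //.
by rewrite in_setD1 eqxx (negbTE yP') /= !orbF (connects_setD1r _ qy yP').
Qed.

End PerfectMatchings.

Local Open Scope ring_scope.

Lemma den_neq0 t M : den t M != 0.
Proof. by rewrite prodf_seq_neq0; apply/allP => p _ /=; rewrite intr_eq0; apply/eqP; lia. Qed.

Lemma denS t M : den t.+1 M = (2 * M - 1)%:~R * den t (M - 1).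
Proof.
rewrite /den big_nat_recl //; congr (_ * _); first by congr (_ %:~R); lia.
by apply: eq_bigr => p _; congr (_ %:~R); lia.
Qed.

Lemma coefA0 a b : coefA a b 0 = 1.
Proof. by rewrite /coefA !bin0. Qed.

Lemma coefAC a b t : coefA a b t = coefA b a t.
Proof. by rewrite /coefA (mulnC 'C(a, t)). Qed.

Lemma coefA_eq0 a b t : (a < t)%N || (b < t)%N -> coefA a b t = 0.
Proof. by case/orP => /bin_small Ht; rewrite /coefA Ht ?muln0 ?mul0n. Qed.

(* Pascal's rule in [a], with [s.+1 * 'C(b, s.+1) = b * 'C(b.-1, s)] for the other half. *)
Lemma coefAS a b s : coefA a.+1 b s.+1 = coefA a b s.+1 + b%:R * coefA a b.-1 s.
Proof.
rewrite /coefA -natrM -natrD binS factS; congr (_ %:R).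
have := mul_bin_diag b s; rewrite mulnC => bin_diag.
rewrite mulnDl mulnDl; congr (_ + _).
have -> : (b * ('C(a, s) * 'C(b.-1, s) * s`!) = 'C(a, s) * ('C(b.-1, s) * b) * s`!)%N by ring.
by rewrite bin_diag; ring.
Qed.

Definition altsum (h : nat -> rat) (a b : nat) (M : int) : rat :=
  \sum_(1 <= t < a.+1) (-1) ^+ t.+1 * h t * coefA a b t / den t M.

Lemma eq_altsum h h' a b M : h =1 h' -> altsum h a b M = altsum h' a b M.
Proof. by move=> hh'; apply: eq_bigr => t _; rewrite hh'. Qed.

Lemma altsum0 h b M : altsum h 0 b M = 0.
Proof. by rewrite /altsum big_geq. Qed.

Lemma altsum_truncate h a b M K : (K <= a)%N ->
    (forall t, (K < t <= a)%N -> h t * coefA a b t = 0) ->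
  altsum h a b M = \sum_(1 <= t < K.+1) (-1) ^+ t.+1 * h t * coefA a b t / den t M.
Proof.
move=> Ka h0; rewrite /altsum (big_cat_nat _ (n := K.+1)) //= ?ltnS //.
rewrite [X in _ + X = _](_ : _ = 0) ?addr0 // big_nat_cond big1 // => t /andP[/andP[Kt ta] _].
by rewrite -(mulrA _ (h t)) h0 ?Kt // mulr0 mul0r.
Qed.

Lemma altsumE h a b M :
  altsum h a b M = \sum_(0 <= s < a) (-1) ^+ s * h s.+1 * coefA a b s.+1 / den s.+1 M.
Proof. by rewrite /altsum big_add1 /=; apply: eq_bigr => s _; rewrite !exprS !mulN1r opprK. Qed.

Lemma altsumS h a b M : altsum h a.+1 b M =
  altsum h a b M + b%:R / (2 * M - 1)%:~R * (h 1%N - altsum (fun s => h s.+1) a b.-1 (M - 1)).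
Proof.
have M2 : (2 * M - 1)%:~R != 0 :> rat by rewrite intr_eq0; apply/eqP; lia.
have split_term s : (-1) ^+ s * h s.+1 * coefA a.+1 b s.+1 / den s.+1 M =
    (-1) ^+ s * h s.+1 * coefA a b s.+1 / den s.+1 M +
    b%:R / (2 * M - 1)%:~R * ((-1) ^+ s * h s.+1 * coefA a b.-1 s / den s (M - 1)).
  rewrite coefAS denS; have := den_neq0 s (M - 1); move: (den s (M - 1)) => D D0.
  by field; rewrite D0 /=; move: M2; rewrite rmorphB rmorphM.
rewrite !altsumE; under eq_bigr do rewrite split_term.
rewrite big_split /= -mulr_sumr big_nat_recr //= coefA_eq0 ?ltnSn // mulr0 mul0r addr0.
congr (_ + _ * _); rewrite big_nat_recl // expr0 !mul1r coefA0 /den big_geq // divr1 mulr1.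
by rewrite -sumrN; congr (_ + _); apply: eq_bigr => s _; rewrite exprS !mulN1r !mulNr.
Qed.

Lemma oddfact_altsumS h a b n :
  (oddfact n.+1)%:R * altsum h a.+1 b n.+1 = (oddfact n.+1)%:R * altsum h a b n.+1 +
    b%:R * ((oddfact n)%:R * (h 1%N - altsum (fun s => h s.+1) a b.-1 n)) :> rat.
Proof.
rewrite altsumS (_ : n.+1%:Z - 1 = n); last by lia.
rewrite oddfactS natrM (_ : (2 * n + 1)%N%:R = (2 * n.+1%:Z - 1)%:~R :> rat); last first.
  by rewrite (_ : 2 * n.+1%:Z - 1 = (2 * n + 1)%N); [|lia].
have : (2 * n.+1%:Z - 1)%:~R != 0 :> rat by rewrite intr_eq0; apply/eqP; lia.
by move: (_ %:~R) => d d0; field.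
Qed.

Lemma Afun_altsum a b M : Afun a b M = altsum (fun _ => 1) a b M.
Proof.
rewrite (@altsum_truncate _ _ _ _ (minn a b)) ?geq_minl //; last first.
  by move=> t /andP[abt _]; rewrite coefA_eq0 ?mul1r //; move: abt; rewrite gtn_min orbC.
by apply: eq_bigr => t _; rewrite mulr1.
Qed.

Lemma Afun0r a M : Afun a 0 M = 0.
Proof. by rewrite /Afun minn0 big_geq. Qed.

Lemma Afun0l b M : Afun 0 b M = 0.
Proof. by rewrite /Afun min0n big_geq. Qed.

Lemma Cfun_altsum a b c M : Cfun a b c M = altsum (fun t => Afun a (c - t) (M - t%:Z)) b c M.
Proof.
rewrite (@altsum_truncate _ _ _ _ (minn b (c - 1))) ?geq_minl //; last first.
  move=> t /andP[bct tb]; have [ct|tc] := ltnP c t; first by rewrite coefA_eq0 ?ct ?orbT ?mulr0.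
  by rewrite (_ : c - t = 0)%N ?Afun0r ?mul0r //; move: bct; rewrite gtn_min ltnNge tb /=; lia.
by apply: eq_bigr => t _; rewrite coefAC.
Qed.

Lemma Cfun0l b c M : Cfun 0 b c M = 0.
Proof. by rewrite /Cfun big1 // => t _; rewrite Afun0l mulr0 !mul0r. Qed.

Lemma Cfun0m a c M : Cfun a 0 c M = 0.
Proof. by rewrite /Cfun min0n big_geq. Qed.

Lemma Tfun_altsum a b c M :
  Tfun a b c M = altsum (fun t => Cfun (a - t) (b - t) c (M - t%:Z)) a b M.
Proof.
rewrite (@altsum_truncate _ _ _ _ (minn (a - 1) (b - 1))); [by []|lia|].
move=> t /andP[abt ta]; have [bt|tb] := ltnP b t; first by rewrite coefA_eq0 ?bt ?orbT ?mulr0.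
have [at_|bt] : (a - t = 0)%N \/ (b - t = 0)%N by lia.
  by rewrite at_ Cfun0l mul0r.
by rewrite bt Cfun0m mul0r.
Qed.

Lemma subzSS (m n : nat) : m.+1%:Z - n.+1%:Z = m%:Z - n%:Z.
Proof. by lia. Qed.

Section Counting.
Variable X : finType.
Implicit Types (U P Q I J R : {set X}) (F G : pred {perm X}).

Lemma nmatchings_pred0 U : nmatchings U pred0 = 0%N.
Proof. by apply: eq_card0 => p; rewrite inE andbF. Qed.

Lemma nmatchings_andbT U F : nmatchings U (fun p => F p && true) = nmatchings U F.
Proof. by apply: eq_nmatchings => p _; rewrite andbT. Qed.

Lemma nmatchings_predC U F G : (nmatchings U (fun p => ~~ G p && F p))%:R =
  (nmatchings U F)%:R - (nmatchings U (fun p => G p && F p))%:R :> rat.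
Proof. by rewrite (nmatchings_split U F G) natrD addrAC subrr add0r. Qed.

Lemma cardsD1_mem (A : {set X}) x : x \in A -> #|A :\ x| = #|A|.-1.
Proof. by move=> xA; rewrite (cardsD1 x A) xA. Qed.

Lemma cards_setD2 U x y n : x != y -> x \in U -> y \in U -> #|U| = n.+1.*2 ->
  #|U :\ x :\ y| = n.*2.
Proof.
move=> xy xU yU cardU; have := cardsD1 x U; have := cardsD1 y (U :\ x).
by rewrite xU in_setD1 eq_sym xy yU cardU /=; lia.
Qed.

Lemma subset_setD2 (A U : {set X}) x y :
  A \subset U -> x \notin A -> y \notin A -> A \subset U :\ x :\ y.
Proof. by move=> AU xA yA; rewrite !subsetD1 AU xA yA. Qed.

Lemma setD1S_setD2l (A U : {set X}) x y :
  A \subset U -> y \notin A -> A :\ x \subset U :\ x :\ y.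
Proof. by move=> AU yA; rewrite subsetD1 setSD // in_setD1 (negbTE yA) andbF. Qed.

Lemma setD1S_setD2r (A U : {set X}) x y :
  A \subset U -> x \notin A -> A :\ y \subset U :\ x :\ y.
Proof.
move=> AU xA; rewrite !subsetD1 (subset_trans (subD1set A y)) //.
by rewrite !in_setD1 eqxx (negbTE xA) andbF.
Qed.

Lemma nmatchings_connects U P Q n :
    P \subset U -> Q \subset U -> [disjoint P & Q] -> #|U| = n.*2 ->
  (nmatchings U (fun p => connects p P Q))%:R
    = (oddfact n)%:R * altsum (fun _ => 1) #|P| #|Q| n :> rat.
Proof.
move cardP: #|P| => a; elim: a U P Q n cardP => [|a IHa] U P Q n cardP sPU sQU dPQ cardU.
  rewrite altsum0 mulr0 (cards0_eq cardP) (@eq_nmatchings _ _ _ pred0) ?nmatchings_pred0 //.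
  by move=> p _; rewrite connects0.
have /card_gt0P[x xP] : (0 < #|P|)%N by rewrite cardP.
have xU := subsetP sPU x xP; have xQ := disjointFr dPQ xP.
case: n cardU => [|n] cardU; first by move: xU; rewrite (cards0_eq cardU) inE.
have cardP' : #|P :\ x| = a by rewrite cardsD1_mem // cardP.
have sP'U := subset_trans (subD1set P x) sPU.
have dP'Q := disjointWl (subD1set P x) dPQ.
rewrite -nmatchings_andbT (nmatchings_connects_peel _ xP) // nmatchings_andbT natrD natr_sum.
rewrite (IHa U _ _ n.+1) //; under eq_bigr => y yQ.
  have yU := subsetP sQU y yQ; have yP := disjointFl dPQ yQ.
  have xy : x != y by apply: contraFneq xQ => ->.
  have cardU' := cards_setD2 xy xU yU cardU.
  have sP'U' := setD1S_setD2l x sPU (negbT yP).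
  have sQ'U' := setD1S_setD2r y sQU (negbT xQ).
  have dP'Q' := disjointW (subD1set P x) (subD1set Q y) dPQ.
  rewrite nmatchings_predC (nmatchingsT cardU') nmatchings_andbT.
  rewrite (IHa _ _ _ n cardP' sP'U' sQ'U' dP'Q' cardU') cardsD1_mem //.
  over.
by rewrite sumr_const -[_ *+ #|Q|]mulr_natl oddfact_altsumS; ring.
Qed.

Lemma nmatchings_connects_both U I J R n :
    I \subset U -> J \subset U -> R \subset U ->
    [disjoint I & J] -> [disjoint I & R] -> [disjoint J & R] -> #|U| = n.*2 ->
  (nmatchings U (fun p => connects p J R && connects p I R))%:R
    = (oddfact n)%:R * altsum (fun t => Afun #|I| (#|R| - t) (n%:Z - t%:Z)) #|J| #|R| n :> rat.
Proof.
move cardJ: #|J| => b.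
elim: b U I J R n cardJ => [|b IHb] U I J R n cardJ sIU sJU sRU dIJ dIR dJR cardU.
  rewrite altsum0 mulr0 (cards0_eq cardJ) (@eq_nmatchings _ _ _ pred0) ?nmatchings_pred0 //.
  by move=> p _; rewrite connects0.
have /card_gt0P[x xJ] : (0 < #|J|)%N by rewrite cardJ.
have xU := subsetP sJU x xJ; have xR := disjointFr dJR xJ; have xI := disjointFl dIJ xJ.
case: n cardU => [|n] cardU; first by move: xU; rewrite (cards0_eq cardU) inE.
have cardJ' : #|J :\ x| = b by rewrite cardsD1_mem // cardJ.
have sJ'U := subset_trans (subD1set J x) sJU; have dIJ' := disjointWr (subD1set J x) dIJ.
rewrite (nmatchings_connects_peel _ xJ) // natrD natr_sum.
rewrite (IHb U I _ R n.+1) ?(disjointWl (subD1set J x)) //.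
under eq_bigr => y yR.
  have yU := subsetP sRU y yR; have yJ := disjointFl dJR yR; have yI := disjointFl dIR yR.
  have xy : x != y by apply: contraFneq xR => ->.
  have cardU' := cards_setD2 xy xU yU cardU.
  have sIU' := subset_setD2 sIU (negbT xI) (negbT yI).
  have sJ'U' := setD1S_setD2l x sJU (negbT yJ).
  have sR'U' := setD1S_setD2r y sRU (negbT xR).
  have dIR' := disjointWr (subD1set R y) dIR.
  have dJ'R' := disjointW (subD1set J x) (subD1set R y) dJR.
  rewrite (@eq_nmatchings _ _ _
             (fun q => ~~ connects q (J :\ x) (R :\ y) && connects q I (R :\ y))); last first.
    move=> q /matching_setD2_fixed[qx qy]; rewrite connects_mul_tperm // xI yI.
    by rewrite /= !orbF (connects_setD1r _ qy (negbT yI)).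
  rewrite nmatchings_predC (nmatchings_connects sIU' sR'U' dIR' cardU') -Afun_altsum.
  rewrite (IHb _ _ _ _ n cardJ' sIU' sJ'U' sR'U' dIJ' dIR' dJ'R' cardU').
  rewrite cardsD1_mem //.
  over.
have hS t : Afun #|I| (#|R| - t.+1) (n.+1%:Z - t.+1%:Z) = Afun #|I| (#|R|.-1 - t) (n%:Z - t%:Z).
  by rewrite subnS predn_sub subzSS.
rewrite sumr_const -[_ *+ #|R|]mulr_natl oddfact_altsumS /= (eq_altsum _ _ _ hS) (hS 0).
by rewrite subn0 subr0; ring.
Qed.

Lemma nmatchings_connects_triangle U I1 I J R n : I1 \subset I ->
    I \subset U -> J \subset U -> R \subset U ->
    [disjoint I & J] -> [disjoint I & R] -> [disjoint J & R] -> #|U| = n.*2 ->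
  (nmatchings U (fun p => connects p I1 J && (connects p J R && connects p I R)))%:R
    = (oddfact n)%:R *
      altsum (fun t => Cfun (#|I| - t) (#|J| - t) #|R| (n%:Z - t%:Z)) #|I1| #|J| n :> rat.
Proof.
move cardI1: #|I1| => a.
elim: a U I1 I J R n cardI1 => [|a IHa] U I1 I J R n cardI1 sI1I sIU sJU sRU dIJ dIR dJR cardU.
  rewrite altsum0 mulr0 (cards0_eq cardI1) (@eq_nmatchings _ _ _ pred0) ?nmatchings_pred0 //.
  by move=> p _; rewrite connects0.
have /card_gt0P[x xI1] : (0 < #|I1|)%N by rewrite cardI1.
have xI := subsetP sI1I x xI1; have xU := subsetP sIU x xI.
have xR := disjointFr dIR xI; have xJ := disjointFr dIJ xI.
case: n cardU => [|n] cardU; first by move: xU; rewrite (cards0_eq cardU) inE.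
have cardI1' : #|I1 :\ x| = a by rewrite cardsD1_mem // cardI1.
rewrite (nmatchings_connects_peel _ xI1) ?(subset_trans sI1I) ?(disjointWl sI1I) //.
rewrite natrD natr_sum (IHa U _ I J R n.+1 _ (subset_trans (subD1set I1 x) sI1I)) //.
under eq_bigr => y yJ.
  have yU := subsetP sJU y yJ; have yR := disjointFr dJR yJ; have yI := disjointFl dIJ yJ.
  have xy : x != y by apply: contraFneq xJ => ->.
  have cardU' := cards_setD2 xy xU yU cardU.
  have sI'U' := setD1S_setD2l x sIU (negbT yI).
  have sJ'U' := setD1S_setD2r y sJU (negbT xJ).
  have sRU' := subset_setD2 sRU (negbT xR) (negbT yR).
  have dI'J' := disjointW (subD1set I x) (subD1set J y) dIJ.
  have dI'R := disjointWl (subD1set I x) dIR; have dJ'R := disjointWl (subD1set J y) dJR.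
  rewrite (@eq_nmatchings _ _ _ (fun q => ~~ connects q (I1 :\ x) (J :\ y) &&
             (connects q (J :\ y) R && connects q (I :\ x) R))); last first.
    move=> q /matching_setD2_fixed[qx qy]; rewrite !connects_mul_tperm // xJ xR yI yR /=.
    rewrite (connects_setD1l _ _ xI) (connects_setD1l _ _ yJ) qx qy xR yR.
    by rewrite !andbF !orbF.
  rewrite nmatchings_predC (nmatchings_connects_both sI'U' sJ'U' sRU' dI'J' dI'R dJ'R cardU').
  rewrite (IHa _ _ _ _ _ n cardI1' (setSD _ sI1I) sI'U' sJ'U' sRU' dI'J' dI'R dJ'R cardU').
  rewrite -Cfun_altsum !cardsD1_mem //.
  over.
have hS t : Cfun (#|I| - t.+1) (#|J| - t.+1) #|R| (n.+1%:Z - t.+1%:Z)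
          = Cfun (#|I|.-1 - t) (#|J|.-1 - t) #|R| (n%:Z - t%:Z).
  by rewrite !subnS !predn_sub subzSS.
rewrite sumr_const -[_ *+ #|J|]mulr_natl oddfact_altsumS /= (eq_altsum _ _ _ hS) (hS 0).
by rewrite !subn0 subr0; ring.
Qed.

End Counting.

Section ConfigurationModel.
Variables (V : finType) (e : rel V).
Hypotheses (esym : symmetric e) (eirr : irreflexive e).

Definition stubs_of (u : V) : {set stub e} := [set s | owner s == u].

Lemma connectedE (p : {perm stub e}) u v : connected p u v = connects p (stubs_of u) (stubs_of v).
Proof. by apply: eq_existsb => s; rewrite !inE. Qed.

Lemma card_stubs_of u : #|stubs_of u| = deg e u.
Proof.
have Tagged_inj : injective (Tagged (fun i => 'I_(deg e i)) (i := u)).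
  by move=> k k' /(congr1 (tagged_as (Tagged _ k))); rewrite !tagged_asE.
rewrite -[RHS]card_ord -(card_imset _ Tagged_inj).
apply: eq_card => -[i k]; rewrite inE /=; apply/eqP/imsetP => [iu|[k' _ /(congr1 tag) //]].
by subst i; exists k.
Qed.

Lemma disjoint_stubs_of u v : u != v -> [disjoint stubs_of u & stubs_of v].
Proof. by move=> uv; rewrite disjoint_subset; apply/subsetP => s; rewrite !inE => /eqP ->. Qed.

Lemma edge_fibre x y : e x y ->
  [set d : V * V | e d.1 d.2 & [set d.1; d.2] == [set x; y]] = [set (x, y); (y, x)].
Proof.
move=> exy; apply/setP => -[a b]; rewrite !inE /= !xpair_eqE.
apply/andP/orP => [[eab /eqP Eab]|[|] /andP[/eqP-> /eqP->]]; last 2 first.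
- by rewrite exy.
- by rewrite esym exy setUC.
have ab : a != b by apply: contraTneq eab => ->; rewrite eirr.
have : a \in [set x; y] by rewrite -Eab !inE eqxx.
have : b \in [set x; y] by rewrite -Eab !inE eqxx orbT.
rewrite !inE => /orP[]/eqP Eb /orP[]/eqP Ea; subst a b; rewrite ?eqxx ?andbT /=.
all: by [left | right | rewrite eqxx in ab].
Qed.

Lemma sum_deg : (\sum_u deg e u)%N = (nedges e).*2.
Proof.
have -> : (\sum_u deg e u = \sum_(d : V * V | e d.1 d.2) 1)%N.
  rewrite -(pair_big_dep xpredT (fun u v => e u v) (fun _ _ => 1%N)) /=.
  by apply: eq_bigr => u _; rewrite /deg -sum1_card; apply: eq_bigl => v; rewrite inE.
rewrite (partition_big (fun d : V * V => [set d.1; d.2]) (mem (edges e))) /=; last first.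
  by move=> [x y] /= exy; apply/imset2P; exists x y; rewrite ?inE.
rewrite (eq_bigr (fun _ => 2%N)) ?sum_nat_const ?muln2 // => E /imset2P[x y _].
rewrite inE => /andP[_ exy] ->.
have xy : x != y by apply: contraTneq exy => ->; rewrite eirr.
rewrite -[RHS](_ : #|[set (x, y); (y, x)]| = 2%N); last by rewrite cards2 xpair_eqE (negbTE xy).
by rewrite -edge_fibre // -sum1_card; apply: eq_bigl => d; rewrite inE.
Qed.

Lemma card_stub : #|{: stub e}| = (nedges e).*2.
Proof.
rewrite -sum_deg card_tagged sumnE big_map big_enum.
by apply: eq_bigr => u _; rewrite card_ord.
Qed.

Lemma matching_on_setT (p : {perm stub e}) :
  matching_on [set: stub e] p = [forall s, (p (p s) == s) && (p s != s)].
Proof. by apply: eq_forallb => s; rewrite inE. Qed.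

Lemma prob_nmatchings (F : pred {perm stub e}) :
  prob F = (nmatchings [set: stub e] F)%:R / (oddfact (nedges e))%:R.
Proof.
rewrite /prob -(nmatchingsT (_ : #|[set: stub e]| = (nedges e).*2)) ?cardsT ?card_stub //.
by congr (_%:R / _%:R); apply: eq_card => p; rewrite !inE matching_on_setT ?andbT.
Qed.

End ConfigurationModel.

Unset Implicit Arguments.

Theorem proposition1 (V : finType) (e : rel V)
  (esym : symmetric e) (eirr : irreflexive e)
  (hm : (1 <= nedges e)%N) (i j r : V)
  (hij : i != j) (hir : i != r) (hjr : j != r) :
  [/\ prob (fun p : {perm stub e} => connected p i j) = Afun (deg e i) (deg e j) (nedges e),
      prob (fun p : {perm stub e} => connected p i r && connected p j r)
        = Cfun (deg e i) (deg e j) (deg e r) (nedges e)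
    & prob (fun p : {perm stub e} => [&& connected p i r, connected p j r & connected p i j])
        = Tfun (deg e i) (deg e j) (deg e r) (nedges e)].
Proof.
have cardT : #|[set: stub e]| = (nedges e).*2 by rewrite cardsT (card_stub esym eirr).
have sT u : stubs_of e u \subset [set: stub e] by apply: subsetT.
have dij := disjoint_stubs_of e hij; have dir := disjoint_stubs_of e hir.
have djr := disjoint_stubs_of e hjr.
have oddfact_neq0 : (oddfact (nedges e))%:R != 0 :> rat by rewrite pnatr_eq0 -lt0n oddfact_gt0.
rewrite !(prob_nmatchings esym eirr); split; under eq_nmatchings => p _ do rewrite !connectedE.
- rewrite (nmatchings_connects (sT i) (sT j) dij cardT) -Afun_altsum !card_stubs_of.
  by rewrite mulrC mulKf.
- under eq_nmatchings => p _ do rewrite andbC.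
  rewrite (nmatchings_connects_both (sT i) (sT j) (sT r) dij dir djr cardT) -Cfun_altsum.
  by rewrite !card_stubs_of mulrC mulKf.
- under eq_nmatchings => p _ do rewrite andbC andbAC andbC.
  rewrite (nmatchings_connects_triangle (subxx _) (sT i) (sT j) (sT r) dij dir djr cardT).
  by rewrite -Tfun_altsum !card_stubs_of mulrC mulKf.
Qed.
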